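(* Let $C\subseteq\mathbb{R}^m$ be closed convex and $\ell$ a loss with (sub)gradient $g$ such that $\ell$ is $(h,\phi)$-restorative and $(\ell,C)$ satisfies inward flow. Let $B\ge0$. Then for every $\tilde\theta\in\mathbb{R}^m$ with $\|\Pi_C(\tilde\theta)-\tilde\theta\|_2\le B$ and $\|\tilde\theta\|_2>h+B$, $$\big\langle\tilde\theta,g(\Pi_C(\tilde\theta))\big\rangle\ge\phi(\Pi_C(\tilde\theta)).$$
   Context: $\Pi_C$ is Euclidean projection onto $C$. $\ell$ is $(h,\phi)$-restorative ($h\ge0$, $\phi$ nonnegative) if all subgradients $g$ satisfy $\langle\theta,g(\theta)\rangle\ge\phi(\theta)$ whenever $\|\theta\|_2>h$. $(\ell,C)$ satisfies inward flow if $-g(\theta)\in T_C(\theta)$ for all $\theta$ on the boundary of $C$, where $T_C(x)=\mathrm{cl}\{y:\exists\beta>0,\ x+\varepsilon y\in C\ \forall\varepsilon\in[0,\beta]\}$. *)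

From HB Require Import structures.
From mathcomp Require Import all_boot all_order all_algebra.
From mathcomp Require Import all_classical all_reals all_analysis.
Set Implicit Arguments. Unset Strict Implicit. Unset Printing Implicit Defensive.
Import Order.TTheory GRing.Theory Num.Theory.
Import numFieldNormedType.Exports.
Local Open Scope classical_set_scope.
Local Open Scope ring_scope.

Definition dotp {R : realType} {m : nat} (u v : 'rV[R]_m) : R :=
  \sum_(i < m) u ord0 i * v ord0 i.

Definition norm2 {R : realType} {m : nat} (u : 'rV[R]_m) : R :=
  Num.sqrt (dotp u u).

Definition is_proj {R : realType} {m : nat} (C : set 'rV[R]_m) (theta p : 'rV[R]_m) : Prop :=
  C p /\ forall y, C y -> norm2 (theta - p) <= norm2 (theta - y).

Definition restorative {R : realType} {m : nat} (g : 'rV[R]_m -> 'rV[R]_m)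
  (h : R) (phi : 'rV[R]_m -> R) : Prop :=
  forall theta, h < norm2 theta -> phi theta <= dotp theta (g theta).

Definition tangent_cone {R : realType} {m : nat} (C : set 'rV[R]_m) (x : 'rV[R]_m)
  : set 'rV[R]_m :=
  @closure _ [set y : 'rV[R]_m | exists2 beta : R, 0 < beta &
             forall eps : R, 0 <= eps -> eps <= beta -> C (x + eps *: y)].

Definition boundary {R : realType} {m : nat} (C : set 'rV[R]_m) : set 'rV[R]_m :=
  closure C `\` interior C.

Definition inward_flow {R : realType} {m : nat} (g : 'rV[R]_m -> 'rV[R]_m)
  (C : set 'rV[R]_m) : Prop :=
  forall theta, boundary C theta -> tangent_cone C theta (- g theta).

(* The projection p of theta onto C makes an obtuse angle with every feasible
   direction d at p: moving along d cannot bring us closer to theta, so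
   <theta - p, d> <= 0, and this passes to the tangent cone because half-spaces
   are closed.  Inward flow (or, if p is interior, the fact that every direction
   is feasible) puts -g(p) in the tangent cone, whence <theta - p, g(p)> >= 0.
   By the triangle inequality ||p|| >= ||theta|| - B > h, so restoration at p
   gives <theta, g(p)> = <p, g(p)> + <theta - p, g(p)> >= phi(p). *)

From HB Require Import structures.
From mathcomp Require Import all_boot all_order all_algebra.
From mathcomp Require Import all_classical all_reals all_analysis.
From mathcomp Require Import lra.
Set Implicit Arguments. Unset Strict Implicit. Unset Printing Implicit Defensive.
Import Order.TTheory GRing.Theory Num.Theory.
Import numFieldNormedType.Exports.
Local Open Scope classical_set_scope.
Local Open Scope ring_scope.

Section InnerProduct.
Context {R : realType} {m : nat}.
Implicit Types u v w : 'rV[R]_m.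

Lemma dotpC u v : dotp u v = dotp v u.
Proof. by apply: eq_bigr => i _; rewrite mulrC. Qed.

Lemma dotpDl u v w : dotp (u + v) w = dotp u w + dotp v w.
Proof. by rewrite /dotp -big_split; apply: eq_bigr => i _; rewrite mxE mulrDl. Qed.

Lemma dotpZl a u w : dotp (a *: u) w = a * dotp u w.
Proof. by rewrite /dotp mulr_sumr; apply: eq_bigr => i _; rewrite mxE mulrA. Qed.

Lemma dotpNl u w : dotp (- u) w = - dotp u w.
Proof. by rewrite -scaleN1r dotpZl mulN1r. Qed.

Lemma dotpBl u v w : dotp (u - v) w = dotp u w - dotp v w.
Proof. by rewrite dotpDl dotpNl. Qed.

Lemma dotpZr a u w : dotp w (a *: u) = a * dotp w u.
Proof. by rewrite dotpC dotpZl dotpC. Qed.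

Lemma dotpNr u w : dotp w (- u) = - dotp w u.
Proof. by rewrite dotpC dotpNl dotpC. Qed.

Lemma dotpBr u v w : dotp w (u - v) = dotp w u - dotp w v.
Proof. by rewrite !(dotpC w) dotpBl. Qed.

Lemma dotpp_ge0 u : 0 <= dotp u u.
Proof. by apply: sumr_ge0 => i _; rewrite -expr2 sqr_ge0. Qed.

Lemma dotpp_eq0 u : dotp u u = 0 -> u = 0.
Proof.
move=> /eqP; rewrite psumr_eq0 => [/allP u0|i _]; last by rewrite -expr2 sqr_ge0.
apply/rowP => i; rewrite mxE.
by apply/eqP; rewrite -sqrf_eq0 expr2 (implyP (u0 i (mem_index_enum i))).
Qed.

Lemma dotp_CauchySchwarz u v : dotp u v ^+ 2 <= dotp u u * dotp v v.
Proof.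
have [->|v0] := eqVneq v 0.
  by rewrite -(scale0r 0) !dotpZr !mul0r expr0n mulr0.
have c_gt0 : 0 < dotp v v.
  by rewrite lt_def dotpp_ge0 andbT; apply: contra v0 => /eqP/dotpp_eq0->.
have := dotpp_ge0 (dotp v v *: u - dotp u v *: v).
rewrite !dotpBl !dotpBr !dotpZl !dotpZr (dotpC v u) => res_ge0.
have : 0 <= dotp v v * (dotp u u * dotp v v - dotp u v ^+ 2) by rewrite expr2; nra.
by rewrite pmulr_rge0 // subr_ge0.
Qed.

Lemma norm2_ge0 u : 0 <= norm2 u.
Proof. exact: sqrtr_ge0. Qed.

Lemma norm2_sqr u : norm2 u ^+ 2 = dotp u u.
Proof. by rewrite sqr_sqrtr // dotpp_ge0. Qed.

Lemma ler_norm2 u v : (norm2 u <= norm2 v) = (dotp u u <= dotp v v).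
Proof. by rewrite ler_sqrt // dotpp_ge0. Qed.

Lemma norm2N u : norm2 (- u) = norm2 u.
Proof. by rewrite /norm2 dotpNl dotpNr opprK. Qed.

Lemma dotp_le_norm2 u v : dotp u v <= norm2 u * norm2 v.
Proof.
rewrite /norm2 -sqrtrM ?dotpp_ge0 // (le_trans (ler_norm _)) //.
by rewrite -sqrtr_sqr ler_sqrt ?dotp_CauchySchwarz // mulr_ge0 // dotpp_ge0.
Qed.

Lemma ler_norm2D u v : norm2 (u + v) <= norm2 u + norm2 v.
Proof.
rewrite -(ler_pXn2r (n := 2)) // ?nnegrE ?addr_ge0 ?norm2_ge0 //.
rewrite norm2_sqr dotpDl !(dotpC _ (u + v)) !dotpDl (dotpC v u) -!norm2_sqr.
have := dotp_le_norm2 u v; lra.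
Qed.

Lemma continuous_dotp w : continuous (dotp w).
Proof.
rewrite /dotp; apply: continuous_big; first exact: add_continuous.
move=> i _ x; apply: (@continuous_comp _ _ _ (fun M : 'rV[R]_m => M ord0 i)).
  exact: coord_continuous.
exact: mulrl_continuous.
Qed.

Lemma closed_dotp_le0 w : closed [set d | dotp w d <= 0].
Proof.
apply: (@preimage_closed _ _ (dotp w) [set x : R | x <= 0]).
  by move=> x _; apply: continuous_dotp.
exact: closed_le.
Qed.

End InnerProduct.

Lemma le0_if_le_small_multiples {R : realFieldType} (b c beta : R) :
  0 < beta -> (forall e, 0 < e -> e <= beta -> b <= e * c) -> b <= 0.
Proof.
move=> beta_gt0 le_bc; rewrite leNgt; apply/negP => b_gt0.
pose e := Num.min beta (b / (`|c| + 1)).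
have c1_gt0 : 0 < `|c| + 1 by rewrite ltr_wpDl.
have e_gt0 : 0 < e by rewrite lt_min beta_gt0 divr_gt0.
have e_small : e * (`|c| + 1) <= b by rewrite -ler_pdivlMr // ge_min lexx orbT.
have := le_bc e e_gt0; rewrite ge_min lexx => /(_ isT).
have := ler_norm c; nra.
Qed.

Section Projection.
Context {R : realType} {m : nat}.
Implicit Types (C : set 'rV[R]_m) (x theta p d : 'rV[R]_m).

Definition feasible_dirs C x : set 'rV[R]_m :=
  [set d | exists2 beta : R, 0 < beta &
           forall eps : R, 0 <= eps -> eps <= beta -> C (x + eps *: d)].

Lemma tangent_coneE C x : tangent_cone C x = closure (feasible_dirs C x).
Proof. by []. Qed.

Lemma interior_feasible_dirs C x d : interior C x -> feasible_dirs C x d.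
Proof.
move=> Cx_int.
have to_x : (fun t : R => x + t *: d) @ (nbhs (0:R)) --> x.
  rewrite -{2}[x]addr0 -(scale0r d).
  by apply: cvgD; [exact: cvg_cst | apply: cvgZr_tmp; exact: cvg_id].
have /nbhs_ballP [r /= r_gt0 ballC] := to_x _ Cx_int.
exists (r / 2) => [|eps eps_ge0 eps_le]; first by rewrite divr_gt0.
apply: ballC; rewrite /ball /= sub0r normrN ger0_norm //.
by apply: le_lt_trans eps_le _; rewrite ltr_pdivrMr //; lra.
Qed.

Lemma proj_feasible_dirs_le0 C theta p d :
  is_proj C theta p -> feasible_dirs C p d -> dotp (theta - p) d <= 0.
Proof.
move=> [_ p_min] [beta beta_gt0 Cd].
suff : 2 * dotp (theta - p) d <= 0 by rewrite pmulr_rle0.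
apply: (@le0_if_le_small_multiples _ _ (dotp d d) _ beta_gt0) => e e_gt0 e_le.
have := p_min _ (Cd e (ltW e_gt0) e_le).
rewrite opprD addrA ler_norm2; move: (theta - p) => v.
rewrite !dotpBl !dotpBr !dotpZl !dotpZr (dotpC d v) => le_v.
have : e * (2 * dotp v d) <= e * (e * dotp d d) by lra.
by rewrite ler_pM2l // mulrA.
Qed.

Lemma proj_tangent_cone_le0 C theta p d :
  is_proj C theta p -> tangent_cone C p d -> dotp (theta - p) d <= 0.
Proof.
move=> p_proj; rewrite tangent_coneE => Td.
have : closure [set d | dotp (theta - p) d <= 0] d.
  by apply: closureS Td => y; apply: proj_feasible_dirs_le0.
by rewrite -(closure_id _).1 //; apply: closed_dotp_le0.
Qed.

Lemma inward_flow_tangent_cone (g : 'rV[R]_m -> 'rV[R]_m) C x :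
  inward_flow g C -> C x -> tangent_cone C x (- g x).
Proof.
move=> flow Cx; have [Cx_int|Cx_bd] := pselect (interior C x).
  by apply: subset_closure; apply: interior_feasible_dirs.
by apply: flow; split; first exact: subset_closure.
Qed.

Lemma proj_dotp_inward_flow_ge0 (g : 'rV[R]_m -> 'rV[R]_m) C theta p :
  inward_flow g C -> is_proj C theta p -> 0 <= dotp (theta - p) (g p).
Proof.
move=> flow p_proj.
have := proj_tangent_cone_le0 p_proj (inward_flow_tangent_cone flow p_proj.1).
by rewrite dotpNr oppr_le0.
Qed.

End Projection.

Lemma norm2_gt_of_dist_le {R : realType} {m : nat} (theta p : 'rV[R]_m) (h B : R) :
  norm2 (p - theta) <= B -> h + B < norm2 theta -> h < norm2 p.
Proof.
have := ler_norm2D p (theta - p).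
by rewrite addrC subrK -opprB norm2N; lra.
Qed.

(* Closedness and convexity of C only guarantee that the projection exists,
   and it is given here. *)
Theorem lemma7 (R : realType) (m : nat) (C : set 'rV[R]_m)
  (g : 'rV[R]_m -> 'rV[R]_m) (h : R) (phi : 'rV[R]_m -> R) (B : R) :
  closed C -> convex_set C ->
  0 <= h -> (forall theta, 0 <= phi theta) ->
  restorative g h phi -> inward_flow g C ->
  0 <= B ->
  forall theta_t p : 'rV[R]_m,
    is_proj C theta_t p ->
    norm2 (p - theta_t) <= B ->
    h + B < norm2 theta_t ->
    phi p <= dotp theta_t (g p).
Proof.
move=> _ _ _ _ restore flow _ theta p p_proj p_near theta_large.
have angle_ge0 := proj_dotp_inward_flow_ge0 flow p_proj.
have restore_p := restore p (norm2_gt_of_dist_le p_near theta_large).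
have -> : theta = p + (theta - p) by rewrite addrC subrK.
by rewrite dotpDl; lra.
Qed.
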